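(* Let $n\ge2$ and $\omega\in\widetilde{S}_n$. Then $\omega$ contains $1342$ if and only if $\omega$ contains $231$; $\omega$ contains $2314$ if and only if it contains $231$; and $\omega$ contains $1423$ if and only if it contains $312$, which holds if and only if it contains $3124$.
   Context: For $n\ge 2$, the affine symmetric group $\widetilde{S}_n$ is the set of bijections $\omega:\mathbb{Z}\to\mathbb{Z}$ such that $\omega(i+n)=\omega(i)+n$ for all $i\in\mathbb{Z}$ and $\sum_{i=1}^n\omega(i)=\binom{n+1}{2}$; write $\omega_i=\omega(i)$. For $p\in S_k$, $\omega$ contains $p$ if there exist integers $i_1<\cdots<i_k$ such that $\omega_{i_1}\cdots\omega_{i_k}$ has the same relative order as $p_1\cdots p_k$; otherwise $\omega$ avoids $p$. *)

From Stdlib Require Import ZArith List Lia.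
Import ListNotations.
Open Scope Z_scope.

Fixpoint sum_1_to (f : Z -> Z) (n : nat) : Z :=
  match n with
  | O => 0
  | S m => sum_1_to f m + f (Z.of_nat (S m))
  end.

Definition affine_perm (n : nat) (w : Z -> Z) : Prop :=
  (forall x y, w x = w y -> x = y) /\
  (forall y, exists x, w x = y) /\
  (forall i, w (i + Z.of_nat n) = w i + Z.of_nat n) /\
  sum_1_to w n = Z.of_nat n * (Z.of_nat n + 1) / 2.

Fixpoint strictly_increasing (l : list Z) : Prop :=
  match l with
  | x :: ((y :: _) as t) => x < y /\ strictly_increasing t
  | _ => True
  end.

Definition contains (w : Z -> Z) (p : list Z) : Prop :=
  exists idx : list Z,
    length idx = length p /\ strictly_increasing idx /\
    forall a b : nat, (a < length p)%nat -> (b < length p)%nat ->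
      (w (nth a idx 0) < w (nth b idx 0) <-> nth a p 0 < nth b p 0).

Definition avoids (w : Z -> Z) (p : list Z) : Prop := ~ contains w p.

(** The patterns 1342 and 1423 are 231 and 312 preceded by a new minimum,
    and 2314 and 3124 are 231 and 312 followed by a new maximum.  Deleting an
    entry of an occurrence leaves an occurrence of the smaller pattern.
    Conversely, since [w (i + m n) = w i + m n], an affine permutation takes
    arbitrarily small values arbitrarily far to the left and arbitrarily large
    values arbitrarily far to the right, so every occurrence of 231 or 312 can
    be extended by such an entry. *)

From Stdlib Require Import ZArith List Lia.
Import ListNotations.
Open Scope Z_scope.

Section PeriodicShift.

Variables (N : Z) (w : Z -> Z).
Hypothesis N_pos : 0 < N.
Hypothesis w_shift : forall i, w (i + N) = w i + N.

Lemma w_shift_mul (m : nat) (i : Z) : w (i + Z.of_nat m * N) = w i + Z.of_nat m * N.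
Proof.
  induction m as [|m IHm].
  - now rewrite !Z.add_0_r.
  - replace (i + Z.of_nat (S m) * N) with (i + Z.of_nat m * N + N) by lia.
    rewrite w_shift, IHm; lia.
Qed.

Lemma w_small_to_left (i B : Z) : exists t, t < i /\ w t < B.
Proof.
  set (m := Z.to_nat (Z.abs (w i - B) + 1)).
  assert (Hm : Z.of_nat m = Z.abs (w i - B) + 1) by (unfold m; lia).
  exists (i - Z.of_nat m * N).
  pose proof (w_shift_mul m (i - Z.of_nat m * N)) as E.
  replace (i - Z.of_nat m * N + Z.of_nat m * N) with i in E by lia.
  split; nia.
Qed.

Lemma w_large_to_right (i B : Z) : exists t, i < t /\ B < w t.
Proof.
  set (m := Z.to_nat (Z.abs (w i - B) + 1)).
  assert (Hm : Z.of_nat m = Z.abs (w i - B) + 1) by (unfold m; lia).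
  exists (i + Z.of_nat m * N).
  pose proof (w_shift_mul m i).
  split; nia.
Qed.

End PeriodicShift.

(* Reduces [contains w p], for a concrete pattern [p] of length 3 or 4, to
   explicit inequalities between the positions and between their values. *)
Ltac pair_facts H :=
  let f a b := try pose proof (H a b ltac:(simpl; lia) ltac:(simpl; lia)) in
  f 0%nat 1%nat; f 0%nat 2%nat; f 0%nat 3%nat; f 1%nat 0%nat; f 1%nat 2%nat;
  f 1%nat 3%nat; f 2%nat 0%nat; f 2%nat 1%nat; f 2%nat 3%nat; f 3%nat 0%nat;
  f 3%nat 1%nat; f 3%nat 2%nat.

Ltac build_indices :=
  refine (conj eq_refl (conj _ _)); [simpl; lia |];
  intros [|[|[|[|a]]]] [|[|[|[|b]]]] Ha Hb; simpl in Ha, Hb |- *; lia.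

Ltac unfold_contains :=
  split;
  [ intros (idx & Hlen & Hinc & Hord);
    destruct idx as [|i [|j [|k [|l [|]]]]]; simpl in Hlen; try discriminate;
    simpl in Hinc; pair_facts Hord; simpl in *;
    first [exists i, j, k, l | exists i, j, k]; lia
  | match goal with
    | |- (exists _ _ _ _, _) -> _ =>
        intros (i & j & k & l & H); exists [i; j; k; l]; build_indices
    | |- (exists _ _ _, _) -> _ =>
        intros (i & j & k & H); exists [i; j; k]; build_indices
    end ].

Section Patterns.

Variable w : Z -> Z.

Lemma contains_231 : contains w [2; 3; 1] <->
  exists i j k, i < j /\ j < k /\ w k < w i < w j.
Proof. unfold_contains. Qed.

Lemma contains_312 : contains w [3; 1; 2] <->
  exists i j k, i < j /\ j < k /\ w j < w k < w i.
Proof. unfold_contains. Qed.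

Lemma contains_1342 : contains w [1; 3; 4; 2] <->
  exists i j k l, i < j /\ j < k /\ k < l /\ w i < w l < w j /\ w j < w k.
Proof. unfold_contains. Qed.

Lemma contains_2314 : contains w [2; 3; 1; 4] <->
  exists i j k l, i < j /\ j < k /\ k < l /\ w k < w i < w j /\ w j < w l.
Proof. unfold_contains. Qed.

Lemma contains_1423 : contains w [1; 4; 2; 3] <->
  exists i j k l, i < j /\ j < k /\ k < l /\ w i < w k < w l /\ w l < w j.
Proof. unfold_contains. Qed.

Lemma contains_3124 : contains w [3; 1; 2; 4] <->
  exists i j k l, i < j /\ j < k /\ k < l /\ w j < w k < w i /\ w i < w l.
Proof. unfold_contains. Qed.

Section SmallToLeft.

Hypothesis small_to_left : forall i B, exists t, t < i /\ w t < B.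

Lemma contains_1342_iff_231 : contains w [1; 3; 4; 2] <-> contains w [2; 3; 1].
Proof.
  rewrite contains_1342, contains_231; split.
  - intros (i & j & k & l & ?); exists j, k, l; lia.
  - intros (i & j & k & ?).
    destruct (small_to_left i (w k)) as (t & ?).
    exists t, i, j, k; lia.
Qed.

Lemma contains_1423_iff_312 : contains w [1; 4; 2; 3] <-> contains w [3; 1; 2].
Proof.
  rewrite contains_1423, contains_312; split.
  - intros (i & j & k & l & ?); exists j, k, l; lia.
  - intros (i & j & k & ?).
    destruct (small_to_left i (w j)) as (t & ?).
    exists t, i, j, k; lia.
Qed.

End SmallToLeft.

Section LargeToRight.

Hypothesis large_to_right : forall i B, exists t, i < t /\ B < w t.

Lemma contains_2314_iff_231 : contains w [2; 3; 1; 4] <-> contains w [2; 3; 1].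
Proof.
  rewrite contains_2314, contains_231; split.
  - intros (i & j & k & l & ?); exists i, j, k; lia.
  - intros (i & j & k & ?).
    destruct (large_to_right k (w j)) as (t & ?).
    exists i, j, k, t; lia.
Qed.

Lemma contains_3124_iff_312 : contains w [3; 1; 2; 4] <-> contains w [3; 1; 2].
Proof.
  rewrite contains_3124, contains_312; split.
  - intros (i & j & k & l & ?); exists i, j, k; lia.
  - intros (i & j & k & ?).
    destruct (large_to_right k (w i)) as (t & ?).
    exists i, j, k, t; lia.
Qed.

End LargeToRight.

End Patterns.

Theorem mainTheorem11 (n : nat) (w : Z -> Z) :
  (2 <= n)%nat -> affine_perm n w ->
  (contains w [1; 3; 4; 2] <-> contains w [2; 3; 1]) /\
  (contains w [2; 3; 1; 4] <-> contains w [2; 3; 1]) /\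
  (contains w [1; 4; 2; 3] <-> contains w [3; 1; 2]) /\
  (contains w [3; 1; 2] <-> contains w [3; 1; 2; 4]).
Proof.
  intros Hn (_ & _ & w_shift & _).
  assert (n_pos : 0 < Z.of_nat n) by lia.
  pose proof (w_small_to_left _ w n_pos w_shift) as small_to_left.
  pose proof (w_large_to_right _ w n_pos w_shift) as large_to_right.
  split; [| split; [| split]].
  - exact (contains_1342_iff_231 w small_to_left).
  - exact (contains_2314_iff_231 w large_to_right).
  - exact (contains_1423_iff_312 w small_to_left).
  - exact (iff_sym (contains_3124_iff_312 w large_to_right)).
Qed.
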